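(* Let $\mathscr V,\mathscr W$ be monoidal categories and $\mathscr C$ a $\mathscr V$-$\mathscr W$-bigraded category. (1) For every left $\mathscr V$-graded category $\mathscr A$, there is a right $\mathscr W$-graded category ${}^{\mathscr V}[\mathscr A,\mathscr C]_{\mathscr W}$ whose objects are the left $\mathscr V$-graded functors $\mathscr A\to{}_{\mathscr V}\mathscr C$, whose graded morphisms of grade $X'$ from $F$ to $G$ are the graded transformations $\phi\colon F\,'\,X'\Rightarrow G$, with composition and reindexing defined pointwise in $\mathscr C_{\mathscr W}$ (i.e. $(\psi\circ\phi)_A=\psi_A\circ\phi_A$ and $(\beta^*\phi)_A=\beta^*(\phi_A)$ in $\mathscr C_{\mathscr W}$) and identities $(\mathsf i_{FA})_A$. (2) Dually, for every right $\mathscr W$-graded category $\mathscr B$, there is a left $\mathscr V$-graded category ${}_{\mathscr V}[\mathscr B,\mathscr C]^{\mathscr W}$ whose objects are right $\mathscr W$-graded functors $\mathscr B\to\mathscr C_{\mathscr W}$, whose grade-$X$ morphisms $F\to G$ are families $\phi_B\in\mathscr C_{(X,I)}(FB,GB)$ ($B\in\mathrm{ob}\,\mathscr B$) such that for every $g\in\mathscr B_{X'}(B,B')$, $(\phi_B,\phi_{B'},Fg,Gg)$ is an $(X,X')$-bigraded square, with pointwise composition and reindexing in ${}_{\mathscr V}\mathscr C$.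
   Context: $\mathscr V,\mathscr W$ monoidal (structure $\otimes,I,a,\ell,r$); $\mathscr W^{\mathrm{rev}}$ has $X\otimes_{\mathrm{rev}}Y=Y\otimes X$. For a monoidal $\mathscr U$, a left $\mathscr U$-graded category has objects, sets $\mathscr C_X(A,B)$, reindexings $\alpha^*f\in\mathscr C_Y(A,B)$ along $\alpha\colon Y\to X$, composites $g\circ f\in\mathscr C_{Y\otimes X}(A,C)$, identities $\mathsf i_A\in\mathscr C_I(A,A)$, with functorial reindexing, $\beta^*g\circ\alpha^*f=(\beta\otimes\alpha)^*(g\circ f)$, $(h\circ g)\circ f=a^*(h\circ(g\circ f))$, $f\circ\mathsf i_A=r_X^*f$, $\mathsf i_B\circ f=\ell_X^*f$; graded functors preserve all this. A right $\mathscr W$-graded category is a left $\mathscr W^{\mathrm{rev}}$-graded one (composite of grades $X'$ then $Y'$ has grade $X'\otimes Y'$). A $\mathscr V$-$\mathscr W$-bigraded category $\mathscr C$ is a left $(\mathscr V\times\mathscr W^{\mathrm{rev}})$-graded category: sets $\mathscr C_{(X,X')}(A,B)$, $g\circ f\in\mathscr C_{(Y\otimes X,X'\otimes Y')}$. Its underlying left $\mathscr V$-graded ${}_{\mathscr V}\mathscr C$: $\mathscr C_{(X,I)}(A,B)$, reindexing $(\alpha,1_I)^*$, composition $(1,\ell_I^{-1})^*(g\circ f)$, identities $\mathsf i_A$; underlying right $\mathscr W$-graded $\mathscr C_{\mathscr W}$: $\mathscr C_{(I,X')}(A,B)$, reindexing $(1_I,\beta)^*$, composition $(\ell_I^{-1},1)^*(\psi\circ\varphi)$,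 identities $\mathsf i_A$. An $(X,X')$-bigraded square is $(f,g,\varphi,\varphi')$ with $f\in\mathscr C_{(X,I)}(A,A')$, $g\in\mathscr C_{(X,I)}(B,B')$, $\varphi\in\mathscr C_{(I,X')}(A,B)$, $\varphi'\in\mathscr C_{(I,X')}(A',B')$ and $(r_X^{-1},r_{X'}^{-1})^*(g\circ\varphi)=(\ell_X^{-1},\ell_{X'}^{-1})^*(\varphi'\circ f)$. For left $\mathscr V$-graded functors $F,G\colon\mathscr A\to{}_{\mathscr V}\mathscr C$ and $X'\in\mathscr W$, a graded transformation $\phi\colon F\,'\,X'\Rightarrow G$ is a family $\phi_A\in\mathscr C_{(I,X')}(FA,GA)$ such that $(Ff,Gf,\phi_A,\phi_B)$ is an $(X,X')$-bigraded square for every $f\in\mathscr A_X(A,B)$. *)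

Set Implicit Arguments.
Unset Strict Implicit.

Record MonData := {
  mob : Type;
  mhom : mob -> mob -> Type;
  mid : forall X, mhom X X;
  mcomp : forall X Y Z, mhom Y Z -> mhom X Y -> mhom X Z;
  mtens : mob -> mob -> mob;
  mtensm : forall X X' Y Y', mhom X X' -> mhom Y Y' -> mhom (mtens X Y) (mtens X' Y');
  munit : mob;
  massoc : forall X Y Z, mhom (mtens (mtens X Y) Z) (mtens X (mtens Y Z));
  massoc_inv : forall X Y Z, mhom (mtens X (mtens Y Z)) (mtens (mtens X Y) Z);
  mlu : forall X, mhom (mtens munit X) X;
  mlu_inv : forall X, mhom X (mtens munit X);
  mru : forall X, mhom (mtens X munit) X;
  mru_inv : forall X, mhom X (mtens X munit)
}.

Arguments mhom {m}.
Arguments mid {m}.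
Arguments mcomp {m X Y Z}.
Arguments mtens {m}.
Arguments mtensm {m X X' Y Y'}.
Arguments munit {m}.
Arguments massoc {m}.
Arguments massoc_inv {m}.
Arguments mlu {m}.
Arguments mlu_inv {m}.
Arguments mru {m}.
Arguments mru_inv {m}.

Record MonLaws (M : MonData) : Prop := {
  mcomp_id_l : forall (X Y : mob M) (f : mhom X Y), mcomp (mid Y) f = f;
  mcomp_id_r : forall (X Y : mob M) (f : mhom X Y), mcomp f (mid X) = f;
  mcomp_assoc : forall (X Y Z T : mob M) (f : mhom X Y) (g : mhom Y Z) (h : mhom Z T),
      mcomp h (mcomp g f) = mcomp (mcomp h g) f;
  mtensm_id : forall (X Y : mob M), mtensm (mid X) (mid Y) = mid (mtens X Y);
  mtensm_comp : forall (X X' X'' Y Y' Y'' : mob M)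
      (f : mhom X X') (f' : mhom X' X'') (g : mhom Y Y') (g' : mhom Y' Y''),
      mtensm (mcomp f' f) (mcomp g' g) = mcomp (mtensm f' g') (mtensm f g);
  massoc_iso1 : forall (X Y Z : mob M), mcomp (massoc_inv X Y Z) (massoc X Y Z) = mid _;
  massoc_iso2 : forall (X Y Z : mob M), mcomp (massoc X Y Z) (massoc_inv X Y Z) = mid _;
  mlu_iso1 : forall (X : mob M), mcomp (mlu_inv X) (mlu X) = mid _;
  mlu_iso2 : forall (X : mob M), mcomp (mlu X) (mlu_inv X) = mid _;
  mru_iso1 : forall (X : mob M), mcomp (mru_inv X) (mru X) = mid _;
  mru_iso2 : forall (X : mob M), mcomp (mru X) (mru_inv X) = mid _;
  massoc_nat : forall (X X' Y Y' Z Z' : mob M) (f : mhom X X') (g : mhom Y Y') (h : mhom Z Z'),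
      mcomp (massoc X' Y' Z') (mtensm (mtensm f g) h)
      = mcomp (mtensm f (mtensm g h)) (massoc X Y Z);
  mlu_nat : forall (X X' : mob M) (f : mhom X X'),
      mcomp (mlu X') (mtensm (mid (@munit M)) f) = mcomp f (mlu X);
  mru_nat : forall (X X' : mob M) (f : mhom X X'),
      mcomp (mru X') (mtensm f (mid (@munit M))) = mcomp f (mru X);
  mpentagon : forall (X Y Z T : mob M),
      mcomp (massoc X Y (mtens Z T)) (massoc (mtens X Y) Z T)
      = mcomp (mtensm (mid X) (massoc Y Z T))
          (mcomp (massoc X (mtens Y Z) T) (mtensm (massoc X Y Z) (mid T)));
  mtriangle : forall (X Y : mob M),
      mcomp (mtensm (mid X) (mlu Y)) (massoc X (@munit M) Y) = mtensm (mru X) (mid Y)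
}.

Definition rev (W : MonData) : MonData := {|
  mob := mob W;
  mhom := @mhom W;
  mid := @mid W;
  mcomp := @mcomp W;
  mtens := fun X Y => mtens Y X;
  mtensm := fun X X' Y Y' f g => mtensm g f;
  munit := munit;
  massoc := fun X Y Z => massoc_inv Z Y X;
  massoc_inv := fun X Y Z => massoc Z Y X;
  mlu := fun X => mru X;
  mlu_inv := fun X => mru_inv X;
  mru := fun X => mlu X;
  mru_inv := fun X => mlu_inv X
|}.

Definition prodM (V W : MonData) : MonData := {|
  mob := (mob V * mob W)%type;
  mhom := fun p q => (mhom (fst p) (fst q) * mhom (snd p) (snd q))%type;
  mid := fun p => (mid (fst p), mid (snd p));
  mcomp := fun p q r g f => (mcomp (fst g) (fst f), mcomp (snd g) (snd f));
  mtens := fun p q => (mtens (fst p) (fst q), mtens (snd p) (snd q));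
  mtensm := fun p p' q q' f g => (mtensm (fst f) (fst g), mtensm (snd f) (snd g));
  munit := (munit, munit);
  massoc := fun p q r => (massoc (fst p) (fst q) (fst r), massoc (snd p) (snd q) (snd r));
  massoc_inv := fun p q r => (massoc_inv (fst p) (fst q) (fst r), massoc_inv (snd p) (snd q) (snd r));
  mlu := fun p => (mlu (fst p), mlu (snd p));
  mlu_inv := fun p => (mlu_inv (fst p), mlu_inv (snd p));
  mru := fun p => (mru (fst p), mru (snd p));
  mru_inv := fun p => (mru_inv (fst p), mru_inv (snd p))
|}.

Record GStruct (M : MonData) (O : Type) (H : mob M -> O -> O -> Type) := {
  sreind : forall X Y (alpha : mhom Y X) A B, H X A B -> H Y A B;
  scomp : forall X Y A B C, H Y B C -> H X A B -> H (mtens Y X) A C;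
  sid : forall A, H munit A A
}.
Arguments GStruct : clear implicits.


Record GStructLaws (M : MonData) (O : Type) (H : mob M -> O -> O -> Type)
    (s : GStruct M O H) : Prop := {
  reind_id : forall X A B (f : H X A B), sreind s (mid X) f = f;
  reind_comp : forall X Y Z (alpha : mhom Y X) (beta : mhom Z Y) A B (f : H X A B),
      sreind s (mcomp alpha beta) f = sreind s beta (sreind s alpha f);
  comp_reind : forall X X' Y Y' (alpha : mhom X' X) (beta : mhom Y' Y) A B C
      (f : H X A B) (g : H Y B C),
      scomp s (sreind s beta g) (sreind s alpha f) = sreind s (mtensm beta alpha) (scomp s g f);
  comp_assoc : forall X Y Z A B C D (f : H X A B) (g : H Y B C) (h : H Z C D),
      scomp s (scomp s h g) f = sreind s (massoc Z Y X) (scomp s h (scomp s g f));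
  comp_id_r : forall X A B (f : H X A B), scomp s f (sid s A) = sreind s (mru X) f;
  comp_id_l : forall X A B (f : H X A B), scomp s (sid s B) f = sreind s (mlu X) f
}.

Record GData (M : MonData) := {
  gob : Type;
  ghom : mob M -> gob -> gob -> Type;
  gstr : GStruct M gob ghom
}.

Arguments gob {M}.
Arguments ghom {M} g X.

Definition greind {M} (D : GData M) {X Y} (alpha : mhom Y X) {A B} (f : ghom D X A B)
  : ghom D Y A B := sreind (gstr D) alpha f.
Definition gcomp {M} (D : GData M) {X Y A B C} (g : ghom D Y B C) (f : ghom D X A B)
  : ghom D (mtens Y X) A C := scomp (gstr D) g f.
Definition gid {M} (D : GData M) (A : gob D) : ghom D munit A A := sid (gstr D) A.

Arguments greind {M} D {X Y} alpha {A B} f.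
Arguments gcomp {M} D {X Y A B C} g f.
Arguments gid {M} D A.

Definition GLaws {M} (D : GData M) : Prop := GStructLaws (gstr D).

(* Right W-graded category = left W^rev-graded category;
   V-W-bigraded category = left (V × W^rev)-graded category. *)

Record GFun {M} (D E : GData M) := {
  fob : gob D -> gob E;
  fhom : forall X A B, ghom D X A B -> ghom E X (fob A) (fob B);
  fun_reind : forall X Y (alpha : mhom Y X) A B (f : ghom D X A B),
      fhom (greind D alpha f) = greind E alpha (fhom f);
  fun_comp : forall X Y A B C (f : ghom D X A B) (g : ghom D Y B C),
      fhom (gcomp D g f) = gcomp E (fhom g) (fhom f);
  fun_id : forall A, fhom (gid D A) = gid E (fob A)
}.

Arguments fob {M D E} _ _.
Arguments fhom {M D E} _ {X A B} _.

Section Underlying.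
Variables (V W : MonData) (C : GData (prodM V (rev W))).

Definition underL : GData V := {|
  gob := gob C;
  ghom := fun X A B => ghom C (X, @munit W) A B;
  gstr := {|
    sreind := fun X Y alpha A B f => greind C ((alpha, mid (@munit W)) : mhom (m := prodM V (rev W)) (Y, munit) (X, munit)) f;
    scomp := fun X Y A B D g f =>
      greind C ((mid (mtens Y X), mlu_inv (@munit W)) : mhom (m := prodM V (rev W)) (mtens Y X, munit) (mtens Y X, mtens munit munit)) (gcomp C g f);
    sid := fun A => gid C A |} |}.

Definition underR : GData (rev W) := {|
  gob := gob C;
  ghom := fun X' A B => ghom C (@munit V, X') A B;
  gstr := {|
    sreind := fun X Y beta A B f => greind C ((mid (@munit V), beta) : mhom (m := prodM V (rev W)) (munit, Y) (munit, X)) f;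
    scomp := fun X Y A B D g f =>
      greind C ((mlu_inv (@munit V), mid (mtens (m := rev W) Y X)) : mhom (m := prodM V (rev W)) (munit, mtens (m := rev W) Y X) (mtens munit munit, mtens (m := rev W) Y X)) (gcomp C g f);
    sid := fun A => gid C A |} |}.

Definition bisquare (X : mob V) (X' : mob W) (A A' B B' : gob C)
    (f : ghom C (X, munit) A A') (g : ghom C (X, munit) B B')
    (phi : ghom C (munit, X') A B) (phi' : ghom C (munit, X') A' B') : Prop :=
  greind C ((mru_inv X, mru_inv X') : mhom (m := prodM V (rev W)) (X, X') (mtens (m := prodM V (rev W)) (X, munit) (munit, X'))) (gcomp C g phi)
  = greind C ((mlu_inv X, mlu_inv X') : mhom (m := prodM V (rev W)) (X, X') (mtens (m := prodM V (rev W)) (munit, X') (X, munit))) (gcomp C phi' f).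

Definition GTrans (A : GData V) (F G : GFun A underL) (X' : mob W) : Type :=
  { phi : forall a : gob A, ghom C (@munit V, X') (fob F a) (fob G a) |
    forall X (a b : gob A) (f : ghom A X a b),
      bisquare (fhom F f) (fhom G f) (phi a) (phi b) }.

Definition GTransR (B : GData (rev W)) (F G : GFun B underR) (X : mob V) : Type :=
  { phi : forall b : gob B, ghom C (X, @munit W) (fob F b) (fob G b) |
    forall X' (b b' : gob B) (g : ghom B X' b b'),
      bisquare (phi b) (phi b') (fhom F g) (fhom G g) }.

End Underlying.

Arguments underL {V W} C.
Arguments underR {V W} C.
Arguments GTrans {V W} C A F G X'.
Arguments GTransR {V W} C B F G X.

(* Everything in the two functor categories is computed pointwise, so they are
   subcategories of the graded category of object-indexed families in C_W
   (resp. _V C), cut out by a predicate closed under reindexing, composition and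
   identities.  That C_W and _V C are graded categories at all, and that bigraded
   squares can be reindexed along a side and pasted, is monoidal coherence,
   chiefly Kelly's identities [lambda_I = rho_I] and
   [lambda_(X (x) Y) o alpha = lambda_X (x) 1].  No law of the source graded
   category is needed. *)

From Stdlib Require Import Setoid FunctionalExtensionality ProofIrrelevance.
Set Implicit Arguments.

Section MonoidalCoherence.
Variable M : MonData.
Hypothesis L : MonLaws M.

Lemma mtensm_comp_l {X X' X'' Y : mob M} (f : mhom X X') (f' : mhom X' X'') :
  mtensm (mcomp f' f) (mid Y) = mcomp (mtensm f' (mid Y)) (mtensm f (mid Y)).
Proof. now rewrite <- (mtensm_comp L), (mcomp_id_l L). Qed.

Lemma mtensm_comp_r {X Y Y' Y'' : mob M} (g : mhom Y Y') (g' : mhom Y' Y'') :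
  mtensm (mid X) (mcomp g' g) = mcomp (mtensm (mid X) g') (mtensm (mid X) g).
Proof. now rewrite <- (mtensm_comp L), (mcomp_id_l L). Qed.

Lemma mcompKl {X Y Z : mob M} (f : mhom X Y) (g : mhom Y X) (h : mhom Z X) :
  mcomp g f = mid X -> mcomp g (mcomp f h) = h.
Proof. intros fK; now rewrite (mcomp_assoc L), fK, (mcomp_id_l L). Qed.

Lemma mcomp_cancel_r {X Y Z : mob M} {a : mhom X Y} {a' : mhom Y X}
    (aK : mcomp a a' = mid Y) {f g : mhom Y Z} :
  mcomp f a = mcomp g a -> f = g.
Proof.
  intros efg.
  now rewrite <- (mcomp_id_r L f), <- (mcomp_id_r L g), <- aK, !(mcomp_assoc L), efg.
Qed.

Lemma mcomp_cancel_l {X Y Z : mob M} {a : mhom Y Z} {a' : mhom Z Y}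
    (aK : mcomp a' a = mid Y) {f g : mhom X Y} :
  mcomp a f = mcomp a g -> f = g.
Proof.
  intros efg.
  now rewrite <- (mcomp_id_l L f), <- (mcomp_id_l L g), <- aK, <- !(mcomp_assoc L), efg.
Qed.

Lemma mtensm_munit_r_inj {X Y : mob M} (f g : mhom X Y) :
  mtensm f (mid munit) = mtensm g (mid munit) -> f = g.
Proof.
  intros efg; apply (mcomp_cancel_r (mru_iso2 L X)).
  now rewrite <- !(mru_nat L), efg.
Qed.

Lemma mtensm_munit_l_inj {X Y : mob M} (f g : mhom X Y) :
  mtensm (mid munit) f = mtensm (mid munit) g -> f = g.
Proof.
  intros efg; apply (mcomp_cancel_r (mlu_iso2 L X)).
  now rewrite <- !(mlu_nat L), efg.
Qed.

Lemma mru_inv_nat {X X' : mob M} (f : mhom X X') :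
  mcomp (mru_inv X') f = mcomp (mtensm f (mid munit)) (mru_inv X).
Proof.
  apply (mcomp_cancel_l (mru_iso1 L X')).
  rewrite !(mcomp_assoc L), (mru_iso2 L), (mcomp_id_l L), (mru_nat L).
  now rewrite <- (mcomp_assoc L), (mru_iso2 L), (mcomp_id_r L).
Qed.

Lemma mlu_inv_nat {X X' : mob M} (f : mhom X X') :
  mcomp (mlu_inv X') f = mcomp (mtensm (mid munit) f) (mlu_inv X).
Proof.
  apply (mcomp_cancel_l (mlu_iso1 L X')).
  rewrite !(mcomp_assoc L), (mlu_iso2 L), (mcomp_id_l L), (mlu_nat L).
  now rewrite <- (mcomp_assoc L), (mlu_iso2 L), (mcomp_id_r L).
Qed.

(* Kelly's consequences of the pentagon and triangle axioms. *)
Lemma mlu_tens (X Y : mob M) :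
  mcomp (mlu (mtens X Y)) (massoc munit X Y) = mtensm (mlu X) (mid Y).
Proof.
  apply mtensm_munit_l_inj.
  set (Q := mcomp (massoc munit (mtens munit X) Y) (mtensm (massoc munit munit X) (mid Y))).
  set (Q' := mcomp (mtensm (massoc_inv munit munit X) (mid Y))
                   (massoc_inv munit (mtens munit X) Y)).
  assert (QK : mcomp Q Q' = mid _).
  { unfold Q, Q'.
    rewrite <- (mcomp_assoc L), (mcomp_assoc L _ (mtensm _ _) (mtensm _ _)), <- (mtensm_comp L).
    rewrite (massoc_iso2 L), (mcomp_id_l L), (mtensm_id L), (mcomp_id_l L).
    apply (massoc_iso2 L). }
  apply (mcomp_cancel_r QK).
  transitivity (mcomp (mtensm (mid munit) (mlu (mtens X Y)))
                  (mcomp (massoc munit munit (mtens X Y)) (massoc (mtens munit munit) X Y))).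
  { unfold Q; rewrite (mpentagon L), <- (mcomp_id_l L (mid munit)) at 1.
    now rewrite (mtensm_comp L), <- !(mcomp_assoc L). }
  rewrite (mcomp_assoc L), (mtriangle L), <- (mtensm_id L), <- (massoc_nat L).
  rewrite <- (mtriangle L), <- (mcomp_id_l L (mid Y)) at 1.
  now rewrite (mtensm_comp L), (mcomp_assoc L), (massoc_nat L); unfold Q; rewrite !(mcomp_assoc L).
Qed.

Lemma mru_tens (X Y : mob M) :
  mcomp (mtensm (mid X) (mru Y)) (massoc X Y munit) = mru (mtens X Y).
Proof.
  assert (assoc_inj : forall f g : mhom (mtens (mtens X Y) munit) (mtens X Y),
     mcomp (massoc X Y munit) (mtensm f (mid munit))
     = mcomp (massoc X Y munit) (mtensm g (mid munit)) -> f = g).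
  { intros f g efg; now apply mtensm_munit_r_inj, (mcomp_cancel_l (massoc_iso1 L _ _ _)). }
  apply assoc_inj.
  rewrite mtensm_comp_l, (mcomp_assoc L), (massoc_nat L), <- (mcomp_assoc L).
  rewrite <- (mtriangle L), mtensm_comp_r, <- (mcomp_assoc L), <- (mpentagon L).
  now rewrite (mcomp_assoc L), <- (massoc_nat L), <- (mcomp_assoc L), (mtensm_id L), (mtriangle L).
Qed.

Lemma mlu_munit : mlu (@munit M) = mru munit.
Proof.
  apply mtensm_munit_r_inj; rewrite <- mlu_tens, <- (mtriangle L); f_equal.
  apply (mcomp_cancel_l (mlu_iso1 L _)); now rewrite (mlu_nat L).
Qed.

Lemma mlu_inv_munit : mlu_inv (@munit M) = mru_inv munit.
Proof.
  apply (mcomp_cancel_l (mlu_iso1 L _)).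
  now rewrite (mlu_iso2 L), mlu_munit, (mru_iso2 L).
Qed.

Lemma mlu_inv_tens (X Y : mob M) :
  mcomp (massoc munit X Y) (mtensm (mlu_inv X) (mid Y)) = mlu_inv (mtens X Y).
Proof.
  apply (mcomp_cancel_l (mlu_iso1 L (mtens X Y))).
  rewrite (mcomp_assoc L), mlu_tens, <- (mtensm_comp L), !(mlu_iso2 L).
  now rewrite (mcomp_id_l L), (mtensm_id L).
Qed.

Lemma mtriangle_inv (X Y : mob M) :
  mcomp (mtensm (mru X) (mid Y)) (massoc_inv X munit Y) = mtensm (mid X) (mlu Y).
Proof. now rewrite <- (mtriangle L), <- (mcomp_assoc L), (massoc_iso2 L), (mcomp_id_r L). Qed.

Lemma mtriangle_inv_inv (X Y : mob M) :
  mcomp (massoc_inv X munit Y) (mtensm (mid X) (mlu_inv Y)) = mtensm (mru_inv X) (mid Y).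
Proof.
  apply (mcomp_cancel_l (a := mtensm (mru X) (mid Y)) (a' := mtensm (mru_inv X) (mid Y))).
  - now rewrite <- (mtensm_comp L), (mru_iso1 L), (mcomp_id_l L), (mtensm_id L).
  - rewrite (mcomp_assoc L), mtriangle_inv, <- !(mtensm_comp L), (mru_iso2 L), (mlu_iso2 L).
    now rewrite !(mcomp_id_l L), !(mtensm_id L).
Qed.

(* The structural isomorphisms produced by pasting two bigraded squares side by side:
   in the grade shared by both squares ([mcomp_paste_shared]) and in the grade that
   gets tensored ([mcomp_paste_tensored]). *)
Lemma mcomp_paste_shared (X : mob M) :
  mcomp (massoc_inv munit munit X)
    (mcomp (mtensm (mid munit) (mcomp (mlu_inv X) (mru X)))
       (mcomp (massoc munit X munit)
          (mcomp (mtensm (mcomp (mlu_inv X) (mru X)) (mid munit))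
             (mcomp (massoc_inv X munit munit)
                (mcomp (mtensm (mid X) (mlu_inv munit)) (mru_inv X)))))) =
  mcomp (mtensm (mlu_inv munit) (mid X)) (mlu_inv X).
Proof.
  rewrite mtensm_comp_l, <- (mcomp_assoc L), (mcomp_assoc L _ (massoc_inv X munit munit)).
  rewrite mtriangle_inv, (mcomp_assoc L _ (mtensm (mid X) (mlu_inv munit))), <- (mtensm_comp L).
  rewrite (mlu_iso2 L), (mcomp_id_l L), (mtensm_id L), (mcomp_id_l L).
  rewrite <- mru_inv_nat, mtensm_comp_r, <- (mcomp_assoc L), (mcomp_assoc L _ (massoc munit X munit)).
  rewrite mru_tens, (mcomp_assoc L _ (mru_inv _)), (mru_iso2 L), (mcomp_id_l L).
  now rewrite (mcomp_assoc L), mtriangle_inv_inv, mlu_inv_munit.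
Qed.

Lemma mcomp_paste_tensored (X Y : mob M) :
  mcomp (massoc munit X Y)
    (mcomp (mtensm (mcomp (mlu_inv X) (mru X)) (mid Y))
       (mcomp (massoc_inv X munit Y)
          (mcomp (mtensm (mid X) (mcomp (mlu_inv Y) (mru Y)))
             (mcomp (massoc X Y munit)
                (mcomp (mtensm (mid (mtens X Y)) (mid munit))
                   (mru_inv (mtens X Y))))))) =
  mcomp (mtensm (mid munit) (mid (mtens X Y))) (mlu_inv (mtens X Y)).
Proof.
  rewrite !(mtensm_id L), !(mcomp_id_l L), mtensm_comp_r, <- (mcomp_assoc L).
  rewrite (mcomp_assoc L _ (massoc X Y munit)), mru_tens, (mru_iso2 L), (mcomp_id_r L).
  rewrite mtensm_comp_l, <- (mcomp_assoc L), (mcomp_assoc L _ (massoc_inv X munit Y)).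
  rewrite mtriangle_inv, <- (mtensm_comp L), (mlu_iso2 L), (mcomp_id_l L), (mtensm_id L).
  now rewrite (mcomp_id_r L); apply mlu_inv_tens.
Qed.

End MonoidalCoherence.

Section ReversedMonoidal.
Variable W : MonData.
Hypothesis L : MonLaws W.

Lemma massoc_inv_nat {X X' Y Y' Z Z' : mob W} (f : mhom X X') (g : mhom Y Y') (h : mhom Z Z') :
  mcomp (massoc_inv X' Y' Z') (mtensm f (mtensm g h))
  = mcomp (mtensm (mtensm f g) h) (massoc_inv X Y Z).
Proof.
  apply (mcomp_cancel_l L (massoc_iso1 L _ _ _)), (mcomp_cancel_r L (massoc_iso2 L _ _ _)).
  rewrite !(mcomp_assoc L), (massoc_iso2 L), (mcomp_id_l L), <- !(mcomp_assoc L).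
  now rewrite (massoc_iso1 L), (mcomp_id_r L), (massoc_nat L).
Qed.

Lemma rev_laws : MonLaws (rev W).
Proof.
  constructor; simpl; intros; try solve [destruct L; auto].
  - apply massoc_inv_nat.
  - set (p := mcomp (massoc T Z (mtens Y X)) (massoc (mtens T Z) Y X)).
    assert (pK : mcomp p (mcomp (massoc_inv (mtens T Z) Y X) (massoc_inv T Z (mtens Y X)))
                 = mid _).
    { unfold p; rewrite <- (mcomp_assoc L), (mcompKl L) by apply (massoc_iso2 L).
      apply (massoc_iso2 L). }
    apply (mcomp_cancel_r L pK).
    unfold p at 1; rewrite <- (mcomp_assoc L), (mcompKl L) by apply (massoc_iso1 L).
    rewrite (massoc_iso1 L); unfold p; rewrite (mpentagon L), <- !(mcomp_assoc L).
    rewrite (mcompKl L (mtensm (mid T) (massoc Z Y X))).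
    2: now rewrite <- (mtensm_comp L), (mcomp_id_l L), (massoc_iso1 L), (mtensm_id L).
    rewrite (mcompKl L (massoc T (mtens Z Y) X)) by apply (massoc_iso1 L).
    now rewrite <- (mtensm_comp L), (mcomp_id_l L), (massoc_iso1 L), (mtensm_id L).
  - apply (mtriangle_inv L).
Qed.

End ReversedMonoidal.

Lemma prod_laws (V W : MonData) : MonLaws V -> MonLaws W -> MonLaws (prodM V W).
Proof.
  intros [] []; constructor; intros; simpl in *;
  repeat match goal with p : prod _ _ |- _ => destruct p end; simpl in *; f_equal; auto.
Qed.

Section GradedCalculus.
Variables (M : MonData) (D : GData M).
Hypothesis hD : GLaws D.

Lemma greind_comp {X Y Z : mob M} (a : mhom Y X) (b : mhom Z Y) {A B} (f : ghom D X A B) :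
  greind D b (greind D a f) = greind D (mcomp a b) f.
Proof. symmetry; apply (reind_comp hD). Qed.

Lemma greind_id {X : mob M} {A B} (f : ghom D X A B) : greind D (mid X) f = f.
Proof. apply (reind_id hD). Qed.

Lemma gcomp_greind_l {X Y Y' : mob M} (b : mhom Y' Y) {A B E} (f : ghom D X A B)
    (g : ghom D Y B E) :
  gcomp D (greind D b g) f = greind D (mtensm b (mid X)) (gcomp D g f).
Proof. unfold greind, gcomp; now rewrite <- (comp_reind hD), (reind_id hD). Qed.

Lemma gcomp_greind_r {X X' Y : mob M} (a : mhom X' X) {A B E} (f : ghom D X A B)
    (g : ghom D Y B E) :
  gcomp D g (greind D a f) = greind D (mtensm (mid Y) a) (gcomp D g f).
Proof. unfold greind, gcomp; now rewrite <- (comp_reind hD), (reind_id hD). Qed.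

Lemma gcompA {X Y Z : mob M} {A B E F} (f : ghom D X A B) (g : ghom D Y B E)
    (h : ghom D Z E F) :
  gcomp D (gcomp D h g) f = greind D (massoc Z Y X) (gcomp D h (gcomp D g f)).
Proof. apply (comp_assoc hD). Qed.

Lemma gcomp_gid_r {X : mob M} {A B} (f : ghom D X A B) :
  gcomp D f (gid D A) = greind D (mru X) f.
Proof. apply (comp_id_r hD). Qed.

Lemma gcomp_gid_l {X : mob M} {A B} (f : ghom D X A B) :
  gcomp D (gid D B) f = greind D (mlu X) f.
Proof. apply (comp_id_l hD). Qed.

Lemma greind_gcompA {X Y Z U : mob M} {A B E F} (f : ghom D X A B) (g : ghom D Y B E)
    (h : ghom D Z E F) (m1 : mhom U (mtens (mtens Z Y) X)) (m2 : mhom U (mtens Z (mtens Y X))) :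
  mcomp (massoc Z Y X) m1 = m2 ->
  greind D m1 (gcomp D (gcomp D h g) f) = greind D m2 (gcomp D h (gcomp D g f)).
Proof. intros <-; now rewrite gcompA, greind_comp. Qed.

Hypothesis L : MonLaws M.

Lemma gcompA_inv {X Y Z : mob M} {A B E F} (f : ghom D X A B) (g : ghom D Y B E)
    (h : ghom D Z E F) :
  gcomp D h (gcomp D g f) = greind D (massoc_inv Z Y X) (gcomp D (gcomp D h g) f).
Proof. now rewrite gcompA, greind_comp, (massoc_iso2 L), greind_id. Qed.

Lemma greind_transpose {X Y Z : mob M} {a : mhom Y X} (a' : mhom X Y) {b : mhom Y Z} {A B}
    {x : ghom D X A B} {y : ghom D Z A B} :
  greind D a x = greind D b y -> mcomp a a' = mid X -> x = greind D (mcomp b a') y.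
Proof.
  intros exy aK; now rewrite <- (greind_id x), <- aK, <- greind_comp, exy, greind_comp.
Qed.

End GradedCalculus.

Section Bigraded.
Variables V W : MonData.
Hypotheses (hV : MonLaws V) (hW : MonLaws W).
Variable C : GData (prodM V (rev W)).
Hypothesis hC : GLaws C.
Let hVW : MonLaws (prodM V (rev W)) := prod_laws hV (rev_laws hW).

Lemma underR_gcompE {X' Y' : mob W} {A B E : gob C} (g : ghom (underR C) Y' B E)
    (f : ghom (underR C) X' A B) :
  gcomp (underR C) g f
  = greind C ((mlu_inv (@munit V), mid (mtens (m := rev W) Y' X'))
               : mhom (m := prodM V (rev W)) (munit, mtens (m := rev W) Y' X')
                   (mtens (m := prodM V (rev W)) (munit, Y') (munit, X')))
      (gcomp C g f).
Proof. reflexivity. Qed.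

Lemma underR_greindE {X' Y' : mob W} (b : mhom Y' X') {A B : gob C}
    (f : ghom (underR C) X' A B) :
  greind (underR C) b f
  = greind C ((mid (@munit V), b) : mhom (m := prodM V (rev W)) (munit, Y') (munit, X')) f.
Proof. reflexivity. Qed.

Lemma underL_gcompE {X Y : mob V} {A B E : gob C} (g : ghom (underL C) Y B E)
    (f : ghom (underL C) X A B) :
  gcomp (underL C) g f
  = greind C ((mid (mtens Y X), mlu_inv (@munit W))
               : mhom (m := prodM V (rev W)) (mtens Y X, munit)
                   (mtens (m := prodM V (rev W)) (Y, munit) (X, munit)))
      (gcomp C g f).
Proof. reflexivity. Qed.

Lemma underL_greindE {X Y : mob V} (a : mhom Y X) {A B : gob C}
    (f : ghom (underL C) X A B) :
  greind (underL C) a f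
  = greind C ((a, mid (@munit W)) : mhom (m := prodM V (rev W)) (Y, munit) (X, munit)) f.
Proof. reflexivity. Qed.

Lemma underR_laws : GLaws (underR C).
Proof.
  constructor; intros; simpl.
  - exact (greind_id hC f).
  - rewrite (greind_comp hC); simpl; now rewrite (mcomp_id_l hV).
  - setoid_rewrite (gcomp_greind_r hC); setoid_rewrite (gcomp_greind_l hC).
    rewrite !(greind_comp hC); f_equal; simpl; f_equal.
    + now rewrite !(mtensm_id hV), !(mcomp_id_l hV), (mcomp_id_r hV).
    + rewrite (mcomp_id_r hW), (mcomp_id_l hW), <- (mtensm_comp hW).
      now rewrite (mcomp_id_l hW), (mcomp_id_r hW).
  - rewrite (gcomp_greind_l hC), (gcomp_greind_r hC), !(greind_comp hC).
    apply (greind_gcompA hC f g h); simpl; f_equal.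
    + now rewrite (mcomp_assoc hV), (mlu_inv_tens hV), (mcomp_id_r hV), (mlu_inv_nat hV).
    + now rewrite !(mtensm_id hW), !(mcomp_id_l hW), (mcomp_id_r hW).
  - setoid_rewrite (gcomp_gid_r hC); rewrite (greind_comp hC); f_equal; simpl; f_equal.
    + now rewrite <- (mlu_munit hV), (mlu_iso2 hV).
    + apply (mcomp_id_r hW).
  - setoid_rewrite (gcomp_gid_l hC); rewrite (greind_comp hC); f_equal; simpl; f_equal.
    + apply (mlu_iso2 hV).
    + apply (mcomp_id_r hW).
Qed.

Lemma underL_laws : GLaws (underL C).
Proof.
  constructor; intros; simpl.
  - exact (greind_id hC f).
  - rewrite (greind_comp hC); simpl; now rewrite (mcomp_id_l hW).
  - setoid_rewrite (gcomp_greind_r hC); setoid_rewrite (gcomp_greind_l hC).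
    rewrite !(greind_comp hC); f_equal; simpl; f_equal.
    + rewrite (mcomp_id_r hV), (mcomp_id_l hV), <- (mtensm_comp hV).
      now rewrite (mcomp_id_l hV), (mcomp_id_r hV).
    + now rewrite !(mtensm_id hW), !(mcomp_id_l hW), (mcomp_id_r hW).
  - rewrite (gcomp_greind_l hC), (gcomp_greind_r hC), !(greind_comp hC).
    apply (greind_gcompA hC f g h); simpl; f_equal.
    + now rewrite !(mtensm_id hV), !(mcomp_id_l hV), (mcomp_id_r hV).
    + rewrite (mcomp_id_r hW), <- (mlu_inv_nat hW), <- (mlu_inv_tens hW), <- (mcomp_assoc hW).
      now rewrite (mcompKl hW) by apply (massoc_iso1 hW).
  - setoid_rewrite (gcomp_gid_r hC); rewrite (greind_comp hC); f_equal; simpl; f_equal.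
    + apply (mcomp_id_r hV).
    + apply (mlu_iso2 hW).
  - setoid_rewrite (gcomp_gid_l hC); rewrite (greind_comp hC); f_equal; simpl; f_equal.
    + apply (mcomp_id_r hV).
    + now rewrite <- (mlu_munit hW), (mlu_iso2 hW).
Qed.

Lemma bisquare_swap (X : mob V) (X' : mob W) (A A' B B' : gob C)
    (f : ghom C (X, munit) A A') (g : ghom C (X, munit) B B')
    (phi : ghom C (munit, X') A B) (phi' : ghom C (munit, X') A' B') :
  bisquare f g phi phi' ->
  gcomp C g phi
  = greind C (mcomp ((mlu_inv X, mlu_inv X')
                       : mhom (m := prodM V (rev W)) (X, X')
                           (mtens (m := prodM V (rev W)) (munit, X') (X, munit)))
                    ((mru X, mru X')
                       : mhom (m := prodM V (rev W))
                           (mtens (m := prodM V (rev W)) (X, munit) (munit, X')) (X, X')))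
      (gcomp C phi' f).
Proof.
  intros sq; apply (greind_transpose hC _ sq).
  simpl; f_equal; [apply (mru_iso1 hV) | apply (mru_iso1 hW)].
Qed.

Lemma bisquare_greindW (X : mob V) (X' Y' : mob W) (b : mhom Y' X') (A A' B B' : gob C)
    (f : ghom C (X, munit) A A') (g : ghom C (X, munit) B B')
    (phi : ghom C (munit, X') A B) (phi' : ghom C (munit, X') A' B') :
  bisquare f g phi phi' ->
  bisquare f g (greind (underR C) b phi) (greind (underR C) b phi').
Proof.
  intros sq%bisquare_swap; unfold bisquare; rewrite !underR_greindE.
  rewrite (gcomp_greind_r hC), (greind_comp hC), sq, (greind_comp hC).
  rewrite (gcomp_greind_l hC), (greind_comp hC); f_equal; simpl; f_equal.
  - rewrite !(mtensm_id hV), !(mcomp_id_l hV), <- (mcomp_assoc hV), (mru_iso2 hV).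
    apply (mcomp_id_r hV).
  - rewrite <- (mlu_inv_nat hW), <- (mru_inv_nat hW), <- (mcomp_assoc hW).
    now rewrite (mcompKl hW) by apply (mru_iso2 hW).
Qed.

Lemma bisquare_gidW (X : mob V) (A A' : gob C) (f : ghom C (X, munit) A A') :
  bisquare f f (gid C A) (gid C A').
Proof.
  unfold bisquare; rewrite (gcomp_gid_r hC), (gcomp_gid_l hC), !(greind_comp hC).
  f_equal; simpl; f_equal.
  - now rewrite (mru_iso2 hV), (mlu_iso2 hV).
  - now rewrite (mlu_munit hW), (mru_iso2 hW), <- (mlu_munit hW), (mlu_iso2 hW).
Qed.

(* Pasting: associativity moves [psi] across [g], and the two pasted squares do the rest. *)
Lemma bisquare_gcompW (X : mob V) (X' Y' : mob W) (A A' B B' D D' : gob C)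
    (f : ghom C (X, munit) A A') (g : ghom C (X, munit) B B') (h : ghom C (X, munit) D D')
    (phi : ghom C (munit, X') A B) (phi' : ghom C (munit, X') A' B')
    (psi : ghom C (munit, Y') B D) (psi' : ghom C (munit, Y') B' D') :
  bisquare f g phi phi' -> bisquare g h psi psi' ->
  bisquare f h (gcomp (underR C) psi phi) (gcomp (underR C) psi' phi').
Proof.
  intros sq1%bisquare_swap sq2%bisquare_swap; unfold bisquare; rewrite !underR_gcompE.
  rewrite (gcomp_greind_r hC), (greind_comp hC).
  setoid_rewrite (gcompA_inv hC hVW phi psi h); rewrite (greind_comp hC).
  setoid_rewrite sq2; rewrite (gcomp_greind_l hC), (greind_comp hC).
  setoid_rewrite (gcompA hC phi g psi'); rewrite (greind_comp hC).
  setoid_rewrite sq1; rewrite (gcomp_greind_r hC), (greind_comp hC).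
  setoid_rewrite (gcompA_inv hC hVW f phi' psi'); rewrite (greind_comp hC).
  rewrite (gcomp_greind_l hC), (greind_comp hC); f_equal; simpl; f_equal.
  - apply (mcomp_paste_shared hV).
  - apply (mcomp_paste_tensored hW).
Qed.

Lemma bisquare_greindV (X Y : mob V) (X' : mob W) (a : mhom Y X) (A A' B B' : gob C)
    (f : ghom C (X, munit) A A') (g : ghom C (X, munit) B B')
    (phi : ghom C (munit, X') A B) (phi' : ghom C (munit, X') A' B') :
  bisquare f g phi phi' ->
  bisquare (greind (underL C) a f) (greind (underL C) a g) phi phi'.
Proof.
  intros sq%bisquare_swap; unfold bisquare; rewrite !underL_greindE.
  rewrite (gcomp_greind_l hC), (greind_comp hC); setoid_rewrite sq.
  rewrite (greind_comp hC), (gcomp_greind_r hC), (greind_comp hC); f_equal; simpl; f_equal.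
  - rewrite <- (mlu_inv_nat hV), <- (mru_inv_nat hV), <- (mcomp_assoc hV).
    now rewrite (mcompKl hV) by apply (mru_iso2 hV).
  - rewrite !(mtensm_id hW), !(mcomp_id_l hW), <- (mcomp_assoc hW), (mru_iso2 hW).
    apply (mcomp_id_r hW).
Qed.

Lemma bisquare_gidV (X' : mob W) (A B : gob C) (phi : ghom C (munit, X') A B) :
  bisquare (gid C A) (gid C B) phi phi.
Proof.
  unfold bisquare; rewrite (gcomp_gid_r hC), (gcomp_gid_l hC), !(greind_comp hC).
  f_equal; simpl; f_equal.
  - now rewrite (mlu_munit hV), (mru_iso2 hV), <- (mlu_munit hV), (mlu_iso2 hV).
  - now rewrite (mru_iso2 hW), (mlu_iso2 hW).
Qed.

Lemma bisquare_gcompV (X Y : mob V) (X' : mob W) (A A' A'' B B' B'' : gob C)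
    (f : ghom C (X, munit) A A') (g : ghom C (X, munit) B B')
    (f' : ghom C (Y, munit) A' A'') (g' : ghom C (Y, munit) B' B'')
    (phi : ghom C (munit, X') A B) (phi' : ghom C (munit, X') A' B')
    (phi'' : ghom C (munit, X') A'' B'') :
  bisquare f g phi phi' -> bisquare f' g' phi' phi'' ->
  bisquare (gcomp (underL C) f' f) (gcomp (underL C) g' g) phi phi''.
Proof.
  intros sq1%bisquare_swap sq2%bisquare_swap; unfold bisquare; rewrite !underL_gcompE.
  rewrite (gcomp_greind_l hC), (greind_comp hC).
  setoid_rewrite (gcompA hC phi g g'); rewrite (greind_comp hC).
  setoid_rewrite sq1; rewrite (gcomp_greind_r hC), (greind_comp hC).
  setoid_rewrite (gcompA_inv hC hVW f phi' g'); rewrite (greind_comp hC).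
  setoid_rewrite sq2; rewrite (gcomp_greind_l hC), (greind_comp hC).
  setoid_rewrite (gcompA hC f f' phi''); rewrite (greind_comp hC).
  rewrite (gcomp_greind_r hC), (greind_comp hC); f_equal; simpl; f_equal.
  - apply (mcomp_paste_tensored hV).
  - apply (mcomp_paste_shared hW).
Qed.

End Bigraded.

Section Pointwise.
Variables (M : MonData) (D : GData M) (O I : Type) (ob : O -> I -> gob D).
Variable P : forall X (F G : O), (forall i, ghom D X (ob F i) (ob G i)) -> Prop.
Hypothesis P_greind : forall X Y (alpha : mhom Y X) F G phi,
  P X F G phi -> P Y F G (fun i => greind D alpha (phi i)).
Hypothesis P_gcomp : forall X Y F G K phi psi,
  P X F G phi -> P Y G K psi -> P (mtens Y X) F K (fun i => gcomp D (psi i) (phi i)).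
Hypothesis P_gid : forall F, P munit F F (fun i => gid D (ob F i)).

Definition pointwise_hom X (F G : O) : Type :=
  {phi : forall i, ghom D X (ob F i) (ob G i) | P X F G phi}.

Definition pointwise : GStruct M O pointwise_hom := {|
  sreind := fun X Y alpha F G phi =>
    exist _ (fun i => greind D alpha (proj1_sig phi i)) (@P_greind _ _ alpha _ _ _ (proj2_sig phi));
  scomp := fun X Y F G K psi phi =>
    exist _ (fun i => gcomp D (proj1_sig psi i) (proj1_sig phi i))
      (@P_gcomp _ _ _ _ _ _ _ (proj2_sig phi) (proj2_sig psi));
  sid := fun F => exist _ (fun i => gid D (ob F i)) (P_gid F) |}.

Lemma pointwise_hom_ext X (F G : O) (phi psi : pointwise_hom X F G) :
  (forall i, proj1_sig phi i = proj1_sig psi i) -> phi = psi.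
Proof.
  destruct phi as [phi Pphi], psi as [psi Ppsi]; simpl; intros ephi.
  apply functional_extensionality_dep in ephi; subst.
  f_equal; apply proof_irrelevance.
Qed.

Lemma pointwise_laws : GLaws D -> GStructLaws pointwise.
Proof.
  intros hD; constructor; intros; apply pointwise_hom_ext; intro i; simpl.
  - apply (reind_id hD).
  - apply (reind_comp hD).
  - apply (comp_reind hD).
  - apply (comp_assoc hD).
  - apply (comp_id_r hD).
  - apply (comp_id_l hD).
Qed.

End Pointwise.

Arguments pointwise {M D O I ob P} P_greind P_gcomp P_gid.
Arguments pointwise_laws {M D O I ob P P_greind P_gcomp P_gid}.

Section Transformations.
Variables V W : MonData.
Hypotheses (hV : MonLaws V) (hW : MonLaws W).
Variable C : GData (prodM V (rev W)).
Hypothesis hC : GLaws C.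

Definition is_gtrans (A : GData V) (X' : mob W) (F G : GFun A (underL C))
    (phi : forall a, ghom (underR C) X' (fob F a) (fob G a)) : Prop :=
  forall X a b (f : ghom A X a b), bisquare (fhom F f) (fhom G f) (phi a) (phi b).
Arguments is_gtrans {A X' F G} phi.

Definition is_gtransR (B : GData (rev W)) (X : mob V) (F G : GFun B (underR C))
    (phi : forall b, ghom (underL C) X (fob F b) (fob G b)) : Prop :=
  forall X' b b' (g : ghom B X' b b'), bisquare (phi b) (phi b') (fhom F g) (fhom G g).
Arguments is_gtransR {B X F G} phi.

Lemma is_gtrans_greind (A : GData V) (X' Y' : mob W) (beta : mhom Y' X')
    (F G : GFun A (underL C)) (phi : forall a, ghom (underR C) X' (fob F a) (fob G a)) :
  is_gtrans (A := A) phi -> is_gtrans (fun a => greind (underR C) beta (phi a)).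
Proof. intros sq X a b f; apply (bisquare_greindW hV hW hC), sq. Qed.

Lemma is_gtrans_gcomp (A : GData V) (X' Y' : mob W) (F G K : GFun A (underL C))
    (phi : forall a, ghom (underR C) X' (fob F a) (fob G a))
    (psi : forall a, ghom (underR C) Y' (fob G a) (fob K a)) :
  is_gtrans (A := A) phi -> is_gtrans (A := A) psi ->
  is_gtrans (fun a => gcomp (underR C) (psi a) (phi a)).
Proof. intros sq1 sq2 X a b f; eapply (bisquare_gcompW hV hW hC); [apply sq1 | apply sq2]. Qed.

Lemma is_gtrans_gid (A : GData V) (F : GFun A (underL C)) :
  is_gtrans (fun a => gid (underR C) (fob F a)).
Proof. intros X a b f; apply (bisquare_gidW hV hW hC). Qed.

Lemma is_gtransR_greind (B : GData (rev W)) (X Y : mob V) (alpha : mhom Y X)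
    (F G : GFun B (underR C)) (phi : forall b, ghom (underL C) X (fob F b) (fob G b)) :
  is_gtransR (B := B) phi -> is_gtransR (fun b => greind (underL C) alpha (phi b)).
Proof. intros sq X' b b' g; apply (bisquare_greindV hV hW hC), sq. Qed.

Lemma is_gtransR_gcomp (B : GData (rev W)) (X Y : mob V) (F G K : GFun B (underR C))
    (phi : forall b, ghom (underL C) X (fob F b) (fob G b))
    (psi : forall b, ghom (underL C) Y (fob G b) (fob K b)) :
  is_gtransR (B := B) phi -> is_gtransR (B := B) psi ->
  is_gtransR (fun b => gcomp (underL C) (psi b) (phi b)).
Proof. intros sq1 sq2 X' b b' g; eapply (bisquare_gcompV hV hW hC); [apply sq1 | apply sq2]. Qed.

Lemma is_gtransR_gid (B : GData (rev W)) (F : GFun B (underR C)) :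
  is_gtransR (fun b => gid (underL C) (fob F b)).
Proof. intros X' b b' g; apply (bisquare_gidV hV hW hC). Qed.

End Transformations.

Theorem theorem8p3 (V W : MonData) (hV : MonLaws V) (hW : MonLaws W)
    (C : GData (prodM V (rev W))) (hC : GLaws C) :
  (forall A : GData V, GLaws A ->
     exists S : GStruct (rev W) (GFun A (underL C))
                  (fun X' F G => GTrans C A F G X'),
       GStructLaws S
       /\ (forall (X' Y' : mob W) (F G K : GFun A (underL C))
             (psi : GTrans C A G K Y') (phi : GTrans C A F G X') (a : gob A),
             proj1_sig (scomp S psi phi) a
             = gcomp (underR C) (proj1_sig psi a) (proj1_sig phi a))
       /\ (forall (X' Y' : mob W) (beta : mhom Y' X') (F G : GFun A (underL C))
             (phi : GTrans C A F G X') (a : gob A),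
             proj1_sig (sreind S beta phi) a
             = greind (underR C) beta (proj1_sig phi a))
       /\ (forall (F : GFun A (underL C)) (a : gob A),
             proj1_sig (sid S F) a = gid (underR C) (fob F a)))
  /\
  (forall B : GData (rev W), GLaws B ->
     exists S : GStruct V (GFun B (underR C))
                  (fun X F G => GTransR C B F G X),
       GStructLaws S
       /\ (forall (X Y : mob V) (F G K : GFun B (underR C))
             (psi : GTransR C B G K Y) (phi : GTransR C B F G X) (b : gob B),
             proj1_sig (scomp S psi phi) b
             = gcomp (underL C) (proj1_sig psi b) (proj1_sig phi b))
       /\ (forall (X Y : mob V) (alpha : mhom Y X) (F G : GFun B (underR C))
             (phi : GTransR C B F G X) (b : gob B),
             proj1_sig (sreind S alpha phi) b
             = greind (underL C) alpha (proj1_sig phi b))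
       /\ (forall (F : GFun B (underR C)) (b : gob B),
             proj1_sig (sid S F) b = gid (underL C) (fob F b))).
Proof.
  split.
  - intros A _.
    exists (pointwise (D := underR C) (ob := fun F : GFun A (underL C) => fob F)
              (P := @is_gtrans V W C A)
              (is_gtrans_greind hV hW hC (A := A)) (is_gtrans_gcomp hV hW hC (A := A))
              (is_gtrans_gid hV hW hC (A := A))).
    split; [exact (pointwise_laws (underR_laws hV hW hC)) | repeat split].
  - intros B _.
    exists (pointwise (D := underL C) (ob := fun F : GFun B (underR C) => fob F)
              (P := @is_gtransR V W C B)
              (is_gtransR_greind hV hW hC (B := B)) (is_gtransR_gcomp hV hW hC (B := B))
              (is_gtransR_gid hV hW hC (B := B))).
    split; [exact (pointwise_laws (underL_laws hV hW hC)) | repeat split].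
Qed.
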